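(* Let $V$ be a separable real Banach space with topological dual $V^*$, and let $M\subset V^*$ be a linearly independent set of continuous linear functionals that separates the points of $V$ and is fundamental with respect to the weak$^*$-topology (i.e. its linear span is weak$^*$-dense in $V^*$). Let $X=(X_m)_{m\in M}$ be a random variable with values in $(\mathbb R^M,\bigotimes_{m\in M}\mathcal B(\mathbb R))$ on a complete probability space $(\Omega,\mathcal F,\mathbb P)$, such that $X$ almost surely lies in the range of the embedding $V\ni v\mapsto (m(v))_{m\in M}\in\mathbb R^M$. Then there is a random variable $\tilde X:\Omega\to V$ which is measurable with respect to the Borel $\sigma$-algebra of $V$ and whose image under this embedding equals $X$ almost surely, i.e. $m(\tilde X)=X_m$ for all $m\in M$ almost surely.
   Context: The embedding $v\mapsto(m(v))_{m\in M}$ is injective since $M$ separates points. All random variables live on a complete probability space. *)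

From HB Require Import structures.
From mathcomp Require Import all_boot all_order all_algebra.
From mathcomp Require Import all_classical all_reals all_analysis.
Set Implicit Arguments. Unset Strict Implicit. Unset Printing Implicit Defensive.
Import Order.TTheory GRing.Theory Num.Theory.
Import numFieldNormedType.Exports.
Local Open Scope classical_set_scope.
Local Open Scope ring_scope.

Section defs.
Context {R : realType} {V : normedModType R}.

Definition is_linear_functional (f : V -> R) :=
  forall (a : R) (u v : V), f (a *: u + v) = a * f u + f v.

Definition in_dual (f : V -> R) := is_linear_functional f /\ continuous f.

Definition separable_space := exists D : set V, countable D /\ closure D = setT.

Definition lin_indep_family (I : Type) (m : I -> V -> R) :=
  forall (n : nat) (s : 'I_n -> I) (c : 'I_n -> R),
    injective s -> (forall v, \sum_(k < n) c k * m (s k) v = 0) ->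
    forall k, c k = 0.

Definition separates_points (I : Type) (m : I -> V -> R) :=
  forall u v : V, (forall i, m i u = m i v) -> u = v.

(* the linear span of the family is weak*-dense in V^*: every weak*-basic
   neighbourhood {psi | |psi(v_j) - phi(v_j)| < eps, j < k} of every
   phi in V^* meets the span *)
Definition weak_star_fundamental (I : Type) (m : I -> V -> R) :=
  forall phi : V -> R, in_dual phi ->
  forall (k : nat) (v : 'I_k -> V) (eps : R), 0 < eps ->
  exists (n : nat) (s : 'I_n -> I) (c : 'I_n -> R),
    forall j, `| \sum_(l < n) c l * m (s l) (v j) - phi (v j) | < eps.

End defs.

Definition borel_sets (T : topologicalType) : set (set T) := <<s open >>.

Definition product_sigma (I : Type) (R : realType) : set (set (I -> R)) :=
  <<s \bigcup_(i in [set: I])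
        [set (fun x : I -> R => x i) @^-1` B | B in [set B : set R | measurable B]] >>.

From HB Require Import structures.
From mathcomp Require Import all_boot all_order all_algebra.
From mathcomp Require Import all_classical all_reals all_analysis.
From mathcomp Require Import borel_hierarchy measurable_realfun.
Import Order.TTheory GRing.Theory Num.Theory.
Import numFieldNormedType.Exports.
Set Implicit Arguments.
Unset Strict Implicit.
Unset Printing Implicit Defensive.
Local Open Scope classical_set_scope.
Local Open Scope ring_scope.

(* Let Xt w be any preimage of X w under the embedding v |-> (m i v)_i, and S
   the class of sets of V with measurable preimage under Xt.  Since P is
   complete and m i o Xt agrees a.e. with the measurable coordinate X_i, S
   contains the preimages under each m i of open sets; as the m i separate
   points, distinct points have neighbourhoods separated by a set of S.
   Lusin's argument upgrades this to disjoint closed sets: a closed set of a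
   complete separable space is a continuous image of the Baire space, and if
   two such images were not separated, neither would be some pair of children
   in the two schemes; following such pairs gives branches converging to
   points of the two sets, whose separating neighbourhoods eventually separate
   the cells.  Every open set is a countable union of closed sets, each
   separated from the complement, so S contains all Borel sets. *)

Section LusinSeparation.
Context {T : topologicalType} (S : set (set T)).

Definition separated_by (A B : set T) :=
  exists E, [/\ S E, A `<=` E & E `&` B = set0].

Lemma separated_byS A A' B B' :
  A `<=` A' -> B `<=` B' -> separated_by A' B' -> separated_by A B.
Proof.
move=> AA' BB' [E [SE A'E EB']]; exists E; split => //.
  exact: subset_trans A'E.
by rewrite -subset0 -EB'; exact: setIS.
Qed.

Hypothesis S_bigcup :
  forall F : nat -> set T, (forall n, S (F n)) -> S (\bigcup_n F n).
Hypothesis S_bigcap :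
  forall F : nat -> set T, (forall n, S (F n)) -> S (\bigcap_n F n).

Lemma separated_by_bigcup (A B : nat -> set T) :
  (forall n k, separated_by (A n) (B k)) ->
  separated_by (\bigcup_n A n) (\bigcup_k B k).
Proof.
move=> AB; have /choice[E hE] : forall n, exists E : nat -> set T,
    forall k, [/\ S (E k), A n `<=` E k & E k `&` B k = set0].
  by move=> n; have [E hE] := choice (AB n); exists E.
exists (\bigcup_n \bigcap_k E n k); split.
- by apply: S_bigcup => n; apply: S_bigcap => k; have [] := hE n k.
- by move=> x [n _ Ax]; exists n => // k _; have [_ + _] := hE n k; exact.
- apply/seteqP; split => // x [[n _ Ex] [k _ Bx]].
  by have [_ _ <-] := hE n k; split => //; exact: Ex.
Qed.

(* [Phi] presents [A] as a continuous image of the Baire space: cells refine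
   along finite sequences, and every branch of nonempty cells shrinks to a
   point of [A]. *)
Definition souslin_scheme (A : set T) (Phi : seq nat -> set T) :=
  [/\ A `<=` Phi [::], (forall s, Phi s `<=` \bigcup_n Phi (n :: s)) &
   forall L : nat -> seq nat, L 0%N = [::] ->
     (forall k, exists n, L k.+1 = n :: L k) -> (forall k, Phi (L k) !=set0) ->
     exists2 x, A x &
       forall U, nbhs x U -> \forall k \near \oo, Phi (L k) `<=` U].

Hypothesis S_set0 : S set0.
Hypothesis S_setT : S setT.
Hypothesis points_separated : forall x y : T, x <> y ->
  exists U W, [/\ nbhs x U, nbhs y W & separated_by U W].

Lemma lusin_separation A B PhiA PhiB :
  souslin_scheme A PhiA -> souslin_scheme B PhiB -> A `&` B = set0 ->
  separated_by A B.
Proof.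
move=> [A0 Acov Alim] [B0 Bcov Blim] AB0.
apply: contrapT => nsep.
pose unsep (p : seq nat * seq nat) := ~ separated_by (PhiA p.1) (PhiB p.2).
have /choice[f unsepf] : forall p, exists q : nat * nat,
    unsep p -> unsep (q.1 :: p.1, q.2 :: p.2).
  move=> p; have [np|] := pselect (unsep p); last by exists (0, 0)%N.
  apply: contrapT => hn; apply: np.
  apply: (separated_byS (Acov p.1) (Bcov p.2)).
  apply: separated_by_bigcup => n k; apply: contrapT => h.
  by apply: hn; exists (n, k).
pose L k := iter k (fun p => ((f p).1 :: p.1, (f p).2 :: p.2)) ([::], [::]).
have unsepL k : unsep (L k).
  elim: k => [|k IH]; last exact: unsepf.
  by move/(separated_byS A0 B0).
have neA k : PhiA (L k).1 !=set0.
  apply/set0P/negP => /eqP A0k; apply: (unsepL k).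
  by exists set0; split => //; [rewrite A0k|exact: set0I].
have neB k : PhiB (L k).2 !=set0.
  apply/set0P/negP => /eqP B0k; apply: (unsepL k).
  by exists setT; split => //; rewrite B0k setI0.
have [x Ax xlim] := Alim (fun k => (L k).1) erefl (fun=> ex_intro _ _ erefl) neA.
have [y By ylim] := Blim (fun k => (L k).2) erefl (fun=> ex_intro _ _ erefl) neB.
have xy : x <> y.
  move=> exy; suff : (A `&` B) x by rewrite AB0.
  by split; rewrite // exy.
have [U [W [xU yW UW]]] := points_separated xy.
near \oo => k.
apply: (unsepL k); apply: separated_byS UW.
- by near: k; exact: xlim.
- by near: k; exact: ylim.
Unshelve. all: by end_near.
Qed.

End LusinSeparation.

Section CompleteSeparable.
Context {R : realType} {T : completePseudoMetricType R}.

Lemma closed_ball_sub_ball (c : T) (r e : R) :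
  0 < e -> r <= e / 2 -> closed_ball c r `<=` ball c e.
Proof. by move=> e0 re y /(le_closed_ball re) /(subset_closure_half e0). Qed.

Lemma cvg_nested_closed_balls (c u : nat -> T) :
  (forall k j, (k <= j)%N -> closed_ball (c k) k.+1%:R^-1 (u j)) -> cvg (u @ \oo).
Proof.
move=> cu; apply: cauchy_cvg; apply: cauchy_exP => e e0.
have e20 : 0 < e / 2 by rewrite divr_gt0.
have [k _ ke] := near_infty_natSinv_lt (PosNum e20).
exists (c k), k => // j /= kj.
by apply: (closed_ball_sub_ball e0 (ltW (ke k (leqnn k)))); exact: cu.
Qed.

Variable d : nat -> T.
Hypothesis dense_seq : forall (y : T) (e : R), 0 < e -> exists n, ball (d n) e y.

(* The [j]-th entry from the end of [s] picks a ball of radius [1/(j+1)]. *)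
Fixpoint chain_balls (s : seq nat) : set T :=
  if s is n :: s' then closed_ball (d n) (size s').+1%:R^-1 `&` chain_balls s'
  else setT.

Lemma closed_souslin_scheme (F : set T) :
  closed F -> souslin_scheme F (fun s => F `&` chain_balls s).
Proof.
move=> clF; split.
- by move=> y Fy; split.
- move=> s y [Fy sy].
  have [|n hn] := dense_seq y (_ : 0 < (size s).+1%:R^-1); first by rewrite invr_gt0.
  by exists n => //; do 2 split => //; exact: subset_closed_ball.
move=> L L0 /choice[c Lc] neL.
have sizeL k : size (L k) = k by elim: k => [|k IH]; rewrite ?L0 // Lc /= IH.
have chain_mono k j :
    (k <= j)%N -> F `&` chain_balls (L j) `<=` F `&` chain_balls (L k).
  move=> /subnKC <-; elim: (j - k)%N => [|i IH]; rewrite ?addn0 ?addnS //.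
  by apply: subset_trans IH; rewrite Lc => y [Fy [_ ?]].
have chain_ball k j : (k < j)%N ->
    F `&` chain_balls (L j) `<=` closed_ball (d (c k)) k.+1%:R^-1.
  by move=> /chain_mono sub y /sub; rewrite Lc /= sizeL => -[_ []].
have [u Lu] := choice (fun k => neL k.+1).
have u_ball k j : (k <= j)%N -> closed_ball (d (c k)) k.+1%:R^-1 (u j).
  by move=> kj; apply: (chain_ball _ j.+1) => //; exact: Lu.
have cvgu : cvg (u @ \oo) by exact: (@cvg_nested_closed_balls (d \o c)).
exists (lim (u @ \oo)).
  by apply: (closed_cvg _ clF) cvgu; apply: nearW => j; have [] := Lu j.
move=> U /nbhs_ballP[e e0 eU].
have e40 : 0 < e / 2 / 2 by rewrite !divr_gt0.
have [k _ ke] := near_infty_natSinv_lt (PosNum e40).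
have x_ball : closed_ball (d (c k)) k.+1%:R^-1 (lim (u @ \oo)).
  apply: (closed_cvg _ (@closed_ball_closed _ _ _ _)) cvgu.
  by exists k => // j /= /u_ball.
exists k.+1 => // j /= kj y /(chain_ball _ _ kj) y_ball; apply: eU.
have e20 : 0 < e / 2 by rewrite divr_gt0.
have sub_half := @closed_ball_sub_ball (d (c k)) _ _ e20 (ltW (ke k (leqnn k))).
rewrite (splitr e); apply: ball_triangle (sub_half _ y_ball).
exact: ball_sym (sub_half _ x_ball).
Qed.

End CompleteSeparable.

Lemma open_Fsigma {R : realType} {T : pseudoMetricType R} (U : set T) :
  open U -> Fsigma U.
Proof.
move=> oU; exists (fun n => closure [set x | ball x n.+1%:R^-1 `<=` U]).
  by move=> n; exact: closed_closure.
apply/seteqP; split => [x Ux|x [n _ clx]].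
- have /nbhs_ballP[e e0 eU] : nbhs x U by exact: open_nbhs_nbhs.
  have [n _ ne] := near_infty_natSinv_lt (PosNum e0).
  exists n => //; apply: subset_closure.
  exact: subset_trans (le_ball (ltW (ne n (leqnn n)))) eU.
- have [|y [yU xy]] := clx (ball x n.+1%:R^-1).
    by apply: nbhsx_ballx; rewrite invr_gt0.
  exact/yU/ball_sym.
Qed.

Lemma nbhs_separated_by_preimage {T Y : topologicalType} (S : set (set T))
    (g : T -> Y) x y :
  hausdorff_space Y -> continuous g -> (forall B, open B -> S (g @^-1` B)) ->
  g x != g y -> exists U W, [/\ nbhs x U, nbhs y W & separated_by S U W].
Proof.
rewrite open_hausdorff => hY cg Sg /hY[[A B]] [/= /set_mem Agx /set_mem Bgy].
move=> [/= oA oB /eqP AB0]; exists (g @^-1` A), (g @^-1` B); split.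
- by apply: cg; exact: open_nbhs_nbhs.
- by apply: cg; exact: open_nbhs_nbhs.
- exists (g @^-1` A); split => //; first exact: Sg.
  by rewrite -preimage_setI AB0 preimage_set0.
Qed.

Section OpenSeparatedClass.
Context {R : realType} {T : completePseudoMetricType R} (S : set (set T)).
Variable d : nat -> T.
Hypothesis dense_seq : forall (y : T) (e : R), 0 < e -> exists n, ball (d n) e y.
Hypothesis S_set0 : S set0.
Hypothesis S_setT : S setT.
Hypothesis S_bigcup :
  forall F : nat -> set T, (forall n, S (F n)) -> S (\bigcup_n F n).
Hypothesis S_bigcap :
  forall F : nat -> set T, (forall n, S (F n)) -> S (\bigcap_n F n).
Hypothesis points_separated : forall x y : T, x <> y ->
  exists U W, [/\ nbhs x U, nbhs y W & separated_by S U W].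

Lemma open_separated_class (U : set T) : open U -> S U.
Proof.
move=> oU; have [F clF UF] := open_Fsigma oU.
have /choice[E hE] n : separated_by S (F n) (~` U).
  apply: (lusin_separation S_bigcup S_bigcap S_set0 S_setT points_separated
    (closed_souslin_scheme dense_seq (clF n))
    (closed_souslin_scheme dense_seq (open_closedC oU))).
  by apply/disjoints_subset; rewrite setCK UF; exact: bigcup_sup.
suff -> : U = \bigcup_n E n by apply: S_bigcup => n; have [] := hE n.
apply/seteqP; split => [x|x [n _ Ex]].
- by rewrite UF => -[n _ Fx]; exists n => //; have [_ + _] := hE n; exact.
- by have [_ _ /disjoints_subset EU] := hE n; exact: contrapT (EU _ Ex).
Qed.

End OpenSeparatedClass.

Lemma borel_measurable_separating_family {R : realType}
    {T : completePseudoMetricType R} (d : nat -> T)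
    {dO} {Omega : measurableType dO} {I : Type}
    (h : I -> T -> R) (f : Omega -> T) :
  (forall (y : T) (e : R), 0 < e -> exists n, ball (d n) e y) ->
  (forall i, continuous (h i)) ->
  (forall x y, (forall i, h i x = h i y) -> x = y) ->
  (forall i, measurable_fun setT (h i \o f)) ->
  forall B, borel_sets B -> measurable (f @^-1` B).
Proof.
move=> dense_seq h_cont h_sep hf_meas.
pose S := [set E : set T | measurable (f @^-1` E)].
have S_set0 : S set0 by rewrite /S /= preimage_set0.
have S_setT : S setT by rewrite /S /= preimage_setT.
have S_setC (E : set T) : S E -> S (~` E).
  by rewrite /S /= preimage_setC; exact: measurableC.
have S_bigcup (F : nat -> set T) : (forall n, S (F n)) -> S (\bigcup_n F n).
  by move=> SF; rewrite /S /= preimage_bigcup; exact: bigcupT_measurable.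
have S_bigcap (F : nat -> set T) : (forall n, S (F n)) -> S (\bigcap_n F n).
  by move=> SF; rewrite /S /= preimage_bigcap; exact: bigcapT_measurable.
have S_sep (x y : T) : x <> y ->
    exists U W, [/\ nbhs x U, nbhs y W & separated_by S U W].
  move=> xy; have [i hxy] : exists i, h i x != h i y.
    apply: contra_notP xy => /forallNP hxy; apply: h_sep => i.
    by apply/eqP/negbNE/negP; exact: hxy.
  apply: nbhs_separated_by_preimage hxy => // B oB.
  rewrite /S /= -comp_preimage -[_ @^-1` _]setTI.
  exact: hf_meas (open_measurable oB).
apply: smallest_sub.
  by split => // E SE; rewrite setTD; exact: S_setC.
exact: open_separated_class dense_seq S_set0 S_setT S_bigcup S_bigcap
  S_sep.
Qed.

Lemma separable_dense_seq {R : realType} {V : normedModType R} :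
  separable_space (V := V) ->
  exists d : nat -> V, forall (y : V) (e : R), 0 < e -> exists n, ball (d n) e y.
Proof.
move=> [D [/pcard_surjP[d Dd] clD]]; exists d => y e e0.
have : closure D y by rewrite clD.
move=> /(_ _ (nbhsx_ballx y e e0))[_ [/Dd[n _ <-] yn]].
by exists n; exact: ball_sym.
Qed.

Theorem lemma3p9 (R : realType) (V : completeNormedModType R)
  (I : Type) (m : I -> V -> R)
  (d : measure_display) (Omega : measurableType d) (P : probability Omega R)
  (X : Omega -> I -> R) :
  separable_space (V := V) ->
  (forall i, in_dual (m i)) ->
  lin_indep_family m ->
  separates_points m ->
  weak_star_fundamental m ->
  measure_is_complete P ->
  (forall A, @product_sigma I R A -> measurable (X @^-1` A)) ->
  {ae P, forall w, exists v : V, forall i, X w i = m i v} ->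
  exists Xt : Omega -> V,
    (forall B, @borel_sets V B -> measurable (Xt @^-1` B)) /\
    {ae P, forall w, forall i, m i (Xt w) = X w i}.
Proof.
move=> sepV m_dual _ m_sep _ P_complete X_meas X_range.
have [dV dense_dV] := separable_dense_seq sepV.
pose embed (v : V) (i : I) := m i v.
pose Xt := pinv_ (fun=> 0) setT embed \o X.
have XtE : {ae P, forall w i, m i (Xt w) = X w i}.
  apply: filterS X_range => w [v Xw] i.
  suff -> : X w = embed (Xt w) by [].
  by rewrite /Xt /= pinvK // inE; exists v => //; apply/funext => j; rewrite Xw.
exists Xt; split => //.
apply: (borel_measurable_separating_family dense_dV (h := m)) => // [i|i].
  by have [] := m_dual i.
apply/measurable_EFinP.
apply: (ae_measurable_fun P_complete (f := EFin \o (X^~ i))).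
  by apply: filterS XtE => w XtEw _ /=; rewrite XtEw.
apply/measurable_EFinP => _ B mB; rewrite setTI.
apply: (X_meas ((fun x : I -> R => x i) @^-1` B)).
by apply: sub_sigma_algebra; exists i => //; exists B.
Qed.
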